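(* Let $\mathbb{K}=\mathbb{F}_q(\!(X)\!)$ be the field of formal Laurent series over a finite field $\mathbb{F}_q$, and $\mathbb{O}=\mathbb{F}_q[\![X]\!]$. Define $f\colon\mathbb{O}\to\mathbb{K}$ by $f\big(\sum_{k=0}^\infty a_kX^k\big)=\sum_{k=0}^\infty a_kX^{[\frac32 k]}$ ($a_k\in\mathbb{F}_q$), where $[r]$ denotes the integer part of $r\ge0$. Then $f$ is $C^\infty_{Lud}$, but not $C^2_{BGN}$.
   Context: $\mathbb{K}$ carries the absolute value with $|x|=q^{-k}$ for $0\neq x=\sum_k a_kX^k$, where $k$ is minimal with $a_k\neq0$; then $\mathbb{O}$ is an open compact subring. For a topological vector space $E$ over a topological field $\mathbb{K}$, an open $U\subseteq E$ and $g\colon U\to F$: $U^{[1]}=\{(x,y,t)\in U\times E\times\mathbb{K}: x+ty\in U\}$, $U^{]1[}=\{(x,y,t)\in U^{[1]}:t\ne0\}$, $g^{]1[}(x,y,t)=(g(x+ty)-g(x))/t$. $g$ is $C^1_{BGN}$ if continuous and $g^{]1[}$ extends continuously to $g^{[1]}\colon U^{[1]}\to F$; $C^k_{BGN}$ ($k\ge2$) if $C^1_{BGN}$ and $g^{[1]}$ is $C^{k-1}_{BGN}$ (on the open set $U^{[1]}$). Ludkovsky's $C^k$: $\Phi_1(U):=U^{]1[}$, $\overline{\Phi}_1(U):=U^{[1]}$; for $k\ge2$, $\overline{\Phi}_k(U)$ is the set of $(x,\xi_1,\ldots,\xi_k,t_1,\ldots,t_k)\in U\times E^k\times\mathbb{K}^k$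 with both $(x,\xi_1,\ldots,\xi_{k-1},t_1,\ldots,t_{k-1})$ and $(x+t_k\xi_k,\xi_1,\ldots,\xi_{k-1},t_1,\ldots,t_{k-1})$ in $\overline{\Phi}_{k-1}(U)$, and $\Phi_k(U)$ its subset with $t_k\ne0$. $g$ is $C^1_{Lud}$ if it is $C^1_{BGN}$; then $\overline{\Phi}_1(g):=g^{[1]}$. For $k\ge2$, $g$ is $C^k_{Lud}$ if it is $C^{k-1}_{Lud}$ and the map $\Phi_k(g)\colon\Phi_k(U)\to F$, $(x,\xi_1,\ldots,\xi_k,t_1,\ldots,t_k)\mapsto t_k^{-1}\big(\overline{\Phi}_{k-1}(g)(x+t_k\xi_k,\xi_1,\ldots,\xi_{k-1},t_1,\ldots,t_{k-1})-\overline{\Phi}_{k-1}(g)(x,\xi_1,\ldots,\xi_{k-1},t_1,\ldots,t_{k-1})\big)$ has a continuous extension $\overline{\Phi}_k(g)\colon\overline{\Phi}_k(U)\to F$. $C^\infty_{Lud}$ means $C^k_{Lud}$ for all $k\in\mathbb{N}$. *)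

From mathcomp Require Import all_boot all_algebra.
From Stdlib Require Import ZArith Reals Lia ClassicalEpsilon.

Set Implicit Arguments.
Unset Strict Implicit.
Unset Printing Implicit Defensive.

Section Laurent.
Variable F : finFieldType.

Record laurent := Laurent {
  coef : Z -> F;
  coef_lb : exists N : Z, forall k, (k < N)%Z -> coef k = GRing.zero
}.

Definition lb (a : laurent) : Z :=
  proj1_sig (constructive_indefinite_description _ (coef_lb a)).

Lemma lbP (a : laurent) k : (k < lb a)%Z -> coef a k = GRing.zero.
Proof.
rewrite /lb; case: (constructive_indefinite_description _ _) => N HN /=; exact: HN.
Qed.

Definition Lzero : laurent :=
  @Laurent (fun _ => GRing.zero) (ex_intro _ 0%Z (fun _ _ => erefl)).

Lemma Lone_lb : exists N : Z, forall k, (k < N)%Z ->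
  (if Z.eqb k 0 then (GRing.one F) else GRing.zero) = GRing.zero.
Proof.
exists 0%Z => k Hk; case: (Z.eqb_spec k 0) => // ?; lia.
Qed.
Definition Lone : laurent := Laurent Lone_lb.

Lemma Ladd_lb (a b : laurent) : exists N : Z, forall k, (k < N)%Z ->
  GRing.add (coef a k) (coef b k) = GRing.zero.
Proof.
exists (Z.min (lb a) (lb b)) => k Hk.
rewrite !lbP; [exact: GRing.addr0 | lia | lia].
Qed.
Definition Ladd (a b : laurent) : laurent := Laurent (Ladd_lb a b).

Lemma Lopp_lb (a : laurent) : exists N : Z, forall k, (k < N)%Z ->
  GRing.opp (coef a k) = GRing.zero.
Proof. exists (lb a) => k Hk; rewrite lbP //; exact: GRing.oppr0. Qed.
Definition Lopp (a : laurent) : laurent := Laurent (Lopp_lb a).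

Definition Lsub (a b : laurent) : laurent := Ladd a (Lopp b).

(* Cauchy product: (ab)_n = sum_{lb a <= i <= n - lb b} a_i b_(n-i) *)
Definition Lmul_coef (a b : laurent) (n : Z) : F :=
  \big[GRing.add/GRing.zero]_(j < Z.to_nat (n - lb a - lb b + 1))
     GRing.mul (coef a (lb a + Z.of_nat j)) (coef b (n - (lb a + Z.of_nat j))).

Lemma Lmul_lb (a b : laurent) : exists N : Z, forall k, (k < N)%Z ->
  Lmul_coef a b k = GRing.zero.
Proof.
exists (lb a + lb b)%Z => k Hk; rewrite /Lmul_coef.
have : (k - lb a - lb b + 1 <= 0)%Z by lia.
case: (k - lb a - lb b + 1)%Z => [|p|p] Hle; first by rewrite big_ord0.
- by exfalso; lia.
- by rewrite big_ord0.
Qed.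
Definition Lmul (a b : laurent) : laurent := Laurent (Lmul_lb a b).

(* multiplicative inverse in the field K (the unique b with a b = 1 if any;
   0 otherwise -- only used for a <> 0) *)
Definition Linv (a : laurent) : laurent :=
  epsilon (inhabits Lzero) (fun b => Lmul a b = Lone).

Definition Lval (a : laurent) : Z :=
  epsilon (inhabits 0%Z)
    (fun v => coef a v <> GRing.zero /\ forall k, (k < v)%Z -> coef a k = GRing.zero).

Definition Labs (a : laurent) : R :=
  match excluded_middle_informative (exists k, coef a k <> GRing.zero) with
  | left _ => powerRZ (INR #|F|) (- Lval a)
  | right _ => 0%R
  end.

Definition Ldist (a b : laurent) : R := Labs (Lsub a b).

Definition inO (a : laurent) : Prop := forall k, (k < 0)%Z -> coef a k = GRing.zero.

(* f (sum_{k>=0} a_k X^k) = sum_{k>=0} a_k X^[3k/2]; the exponent map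
   k |-> [3k/2] is injective, so the n-th coefficient is the sum of the
   (at most one) a_k with [3k/2] = n (and k <= n necessarily). *)
Definition fO_coef (a : laurent) (n : Z) : F :=
  if (n <? 0)%Z then GRing.zero else
  \big[GRing.add/GRing.zero]_(k < (Z.to_nat n).+1 | (3 * k)./2 == Z.to_nat n)
     coef a (Z.of_nat k).

Lemma fO_lb (a : laurent) : exists N : Z, forall k, (k < N)%Z ->
  fO_coef a k = GRing.zero.
Proof.
exists 0%Z => k Hk; rewrite /fO_coef.
by have -> : (k <? 0)%Z = true by apply/Z.ltb_lt.
Qed.
Definition fO (a : laurent) : laurent := Laurent (fO_lb a).

End Laurent.

Record space (F : finFieldType) := Space {
  pt :> Type;
  padd : pt -> pt -> pt;
  pscale : laurent F -> pt -> pt;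
  pdist : pt -> pt -> R
}.

Definition Kspace (F : finFieldType) : space F :=
  @Space F (laurent F) (@Ladd F) (@Lmul F) (@Ldist F).

Definition prod3 (F : finFieldType) (E : space F) : space F :=
  @Space F (E * E * laurent F)
    (fun p q => (padd p.1.1 q.1.1, padd p.1.2 q.1.2, Ladd p.2 q.2))
    (fun s p => (pscale s p.1.1, pscale s p.1.2, Lmul s p.2))
    (fun p q => Rmax (Rmax (pdist p.1.1 q.1.1) (pdist p.1.2 q.1.2)) (Ldist p.2 q.2)).

Definition cont_on (F : finFieldType) (E : space F) (A : E -> Prop)
    (h : E -> laurent F) : Prop :=
  forall p, A p -> forall eps : R, (0 < eps)%R -> exists del : R, (0 < del)%R /\
    forall p', A p' -> (pdist p p' < del)%R -> (Ldist (h p) (h p') < eps)%R.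

Definition U1 (F : finFieldType) (E : space F) (U : E -> Prop) : prod3 E -> Prop :=
  fun p => U p.1.1 /\ U (padd p.1.1 (pscale p.2 p.1.2)).

Definition diffq (F : finFieldType) (E : space F) (g : E -> laurent F) :
    prod3 E -> laurent F :=
  fun p => Lmul (Linv p.2) (Lsub (g (padd p.1.1 (pscale p.2 p.1.2))) (g p.1.1)).

(* C^k_BGN on U (k >= 1; CBGN 0 is mere continuity, used only as base case):
   C^(k+1) : g continuous, g^]1[ has a continuous extension g^[1] on U^[1],
   and g^[1] is C^k on U^[1]. *)
Fixpoint CBGN (F : finFieldType) (k : nat) (E : space F) (U : E -> Prop)
    (g : E -> laurent F) {struct k} : Prop :=
  match k with
  | 0 => cont_on U g
  | k'.+1 => cont_on U g /\
      exists G : prod3 E -> laurent F,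
        (forall p, U1 U p -> p.2 <> Lzero F -> G p = diffq g p) /\
        cont_on (U1 U) G /\
        CBGN k' (U1 U) G
  end.

(* A point (x, xi_1..xi_k, t_1..t_k) is encoded as x together with the list
   [:: (xi_k,t_k); ...; (xi_1,t_1)] (last pair at the head). *)

Fixpoint Phibar (F : finFieldType) (U : laurent F -> Prop) (x : laurent F)
    (ps : seq (laurent F * laurent F)) : Prop :=
  match ps with
  | [::] => U x
  | (xi, t) :: ps' => Phibar U x ps' /\ Phibar U (Ladd x (Lmul t xi)) ps'
  end.

Fixpoint ldist (F : finFieldType) (ps qs : seq (laurent F * laurent F)) : R :=
  match ps, qs with
  | (a, b) :: ps', (c, d) :: qs' => Rmax (Rmax (Ldist a c) (Ldist b d)) (ldist ps' qs')
  | _, _ => 0%R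
  end.

(* G x ps (with size ps = j) plays the role of Phibar_j(g); G x [::] = g x. *)
Definition CLud (F : finFieldType) (k : nat) (U : laurent F -> Prop)
    (g : laurent F -> laurent F) : Prop :=
  cont_on (E := Kspace F) U g /\
  exists G : laurent F -> seq (laurent F * laurent F) -> laurent F,
    (forall x, U x -> G x [::] = g x) /\
    forall j : nat, (1 <= j <= k)%nat ->
      (forall x xi t ps, size ps = j.-1 -> Phibar U x ((xi, t) :: ps) -> t <> Lzero F ->
         G x ((xi, t) :: ps) =
         Lmul (Linv t) (Lsub (G (Ladd x (Lmul t xi)) ps) (G x ps))) /\
      (forall x ps, size ps = j -> Phibar U x ps ->
         forall eps : R, (0 < eps)%R -> exists del : R, (0 < del)%R /\
           forall x' ps', size ps' = j -> Phibar U x' ps' ->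
             (Rmax (Ldist x x') (ldist ps ps') < del)%R ->
             (Ldist (G x ps) (G x' ps') < eps)%R).

Definition CLud_inf (F : finFieldType) (U : laurent F -> Prop)
    (g : laurent F -> laurent F) : Prop :=
  forall k, CLud k U g.

From Pilot Require Import Defs.
From mathcomp Require Import all_boot all_algebra zify.
From Stdlib Require Import ZArith Reals Lia Lra.
From Stdlib Require Import ClassicalEpsilon Classical FunctionalExtensionality ProofIrrelevance.

Set Implicit Arguments.
Unset Strict Implicit.
Unset Printing Implicit Defensive.
Import GRing.Theory.

(* f is additive, so its difference quotient at (x, xi, t) is t^-1 f(t xi), independent of x.
   Since f multiplies valuations by about 3/2, |t^-1 f(t xi)| is at most a constant times
   |t|^(1/2) |xi|^(3/2), so it tends to 0 with t: Phibar_1(f)(x, xi, t) := t^-1 f(t xi),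
   extended by 0 at t = 0, is continuous, and all Phibar_j(f) with j >= 2 vanish, so f is C^oo
   in Ludkovsky's sense.  In the BGN sense, f^[1](0, 1, X^n) = X^([3n/2] - n) forces
   f^[1](0, 1, 0) = 0, and then the difference quotient of f^[1] at (0, 1, 0) in direction
   (0, 0, 1) with step X^n is X^([3n/2] - 2n), which diverges: f^[1] is not C^1. *)

Section LaurentSeries.
Variable F : finFieldType.
Local Open Scope ring_scope.
Implicit Types (a b t xi : laurent F) (N : Z).

Lemma laurent_ext a b : (forall k, coef a k = coef b k) -> a = b.
Proof.
case: a b => ca pa [cb pb] /= eq_ab.
have eq_c : ca = cb by apply: functional_extensionality.
by subst cb; f_equal; apply: proof_irrelevance.
Qed.

Lemma coef_Ladd a b k : coef (Ladd a b) k = coef a k + coef b k. Proof. by []. Qed.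
Lemma coef_Lsub a b k : coef (Lsub a b) k = coef a k - coef b k. Proof. by []. Qed.

Lemma Ladd_0l a : Ladd (Lzero F) a = a.
Proof. by apply: laurent_ext => k; rewrite coef_Ladd add0r. Qed.

Lemma Ladd_0r a : Ladd a (Lzero F) = a.
Proof. by apply: laurent_ext => k; rewrite coef_Ladd addr0. Qed.

Lemma Lsub_0r a : Lsub a (Lzero F) = a.
Proof. by apply: laurent_ext => k; rewrite coef_Lsub subr0. Qed.

Lemma Lsubrr a : Lsub a a = Lzero F.
Proof. by apply: laurent_ext => k; rewrite coef_Lsub subrr. Qed.

Definition vanish a (v : Z) := forall k, (k < v)%Z -> coef a k = 0.
Definition agree N a b := forall k, (k <= N)%Z -> coef a k = coef b k.
Definition is_val a (v : Z) := coef a v <> 0 /\ vanish a v.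

Lemma vanish_lb a : vanish a (lb a).
Proof. exact: lbP. Qed.

Lemma vanish0 v : vanish (Lzero F) v.
Proof. by []. Qed.

Lemma agree_le M N a b : (M <= N)%Z -> agree N a b -> agree M a b.
Proof. by move=> le_MN ab k le_k; apply: ab; lia. Qed.

Lemma agree_sym N a b : agree N a b -> agree N b a.
Proof. by move=> ab k /ab. Qed.

Lemma agree_trans N a b c : agree N a b -> agree N b c -> agree N a c.
Proof. by move=> ab bc k le_k; rewrite ab ?bc. Qed.

Lemma agree_vanish N a b v : agree N a b -> vanish a v -> (v <= N + 1)%Z -> vanish b v.
Proof. by move=> ab va le_v k lt_k; rewrite -ab ?va //; lia. Qed.

Lemma is_val_ex a : a <> Lzero F -> exists v, is_val a v.
Proof.
move=> a_neq0.
have [k ak] : exists k, coef a k <> 0.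
  apply: NNPP => all0; apply: a_neq0; apply: laurent_ext => k.
  by apply: NNPP => ak; apply: all0; exists k.
have ex_m : exists m, coef a (lb a + Z.of_nat m)%Z != 0.
  have [lt_k|le_k] := Z.lt_ge_cases k (lb a); first by rewrite vanish_lb in ak.
  exists (Z.to_nat (k - lb a)); apply/eqP.
  by have -> : (lb a + Z.of_nat (Z.to_nat (k - lb a)))%Z = k by lia.
case: (ex_minnP ex_m) => m /eqP am min_m.
exists (lb a + Z.of_nat m)%Z; split=> // i lt_i.
have [lt_lb|ge_lb] := Z.lt_ge_cases i (lb a); first exact: vanish_lb.
have := min_m (Z.to_nat (i - lb a)).
have -> : (lb a + Z.of_nat (Z.to_nat (i - lb a)))%Z = i by lia.
by case: (coef a i =P 0) => // _ /(_ isT); lia.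
Qed.

Lemma sum_window (T : Z -> F) (al g : Z) (M K : nat) :
  (g <= al)%Z -> (al + Z.of_nat M <= g + Z.of_nat K)%Z ->
  (forall i, (i < al)%Z -> T i = 0) -> (forall i, (al + Z.of_nat M <= i)%Z -> T i = 0) ->
  \sum_(j < M) T (al + Z.of_nat j)%Z = \sum_(j < K) T (g + Z.of_nat j)%Z.
Proof.
move=> le_g le_K T_lo T_hi; pose d := Z.to_nat (al - g).
have -> : K = (d + (M + (K - (d + M))))%nat by rewrite /d; lia.
rewrite !big_split_ord /= [\sum_(i < d) _]big1 => [|j _]; last first.
  by apply: T_lo; have := ltn_ord j; rewrite /d; lia.
rewrite [\sum_(i < K - _) _]big1 => [|j _]; last by apply: T_hi; rewrite /d; lia.
by rewrite add0r addr0; apply: eq_bigr => j _; congr T; rewrite /d; lia.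
Qed.

Lemma coef_Lmul_window a b al be n : vanish a al -> vanish b be ->
  coef (Lmul a b) n = \sum_(j < Z.to_nat (n - al - be + 1))
    coef a (al + Z.of_nat j)%Z * coef b (n - (al + Z.of_nat j))%Z.
Proof.
move=> va vb; rewrite /= /Lmul_coef.
pose T i := coef a i * coef b (n - i)%Z.
have T_lo c : vanish a c -> forall i, (i < c)%Z -> T i = 0.
  by move=> vc i /vc; rewrite /T => ->; rewrite mul0r.
have T_hi c : vanish b c -> forall i, (n - c < i)%Z -> T i = 0.
  by move=> vc i lt_i; rewrite /T vc ?mulr0 //; lia.
pose g := Z.min al (lb a).
pose K := Z.to_nat (Z.abs al + Z.abs (lb a) + Z.abs n + Z.abs be + Z.abs (lb b) + 1).
rewrite (@sum_window T (lb a) g _ K) ?(@sum_window T al g _ K) //;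
  try (rewrite /g /K; lia).
- exact: T_lo.
- by move=> i ?; apply: (T_hi _ vb); lia.
- exact: (T_lo _ (@vanish_lb a)).
- by move=> i ?; apply: (T_hi _ (@vanish_lb b)); lia.
Qed.

Lemma Lmul_vanish a b al be : vanish a al -> vanish b be -> vanish (Lmul a b) (al + be).
Proof.
move=> va vb n lt_n; rewrite (coef_Lmul_window n va vb).
have -> : Z.to_nat (n - al - be + 1) = 0%nat by lia.
by rewrite big_ord0.
Qed.

Lemma Lmul_0l a : Lmul (Lzero F) a = Lzero F.
Proof. by apply: laurent_ext => k; rewrite /= /Lmul_coef big1 // => j _; rewrite mul0r. Qed.

Lemma Lmul_0r a : Lmul a (Lzero F) = Lzero F.
Proof. by apply: laurent_ext => k; rewrite /= /Lmul_coef big1 // => j _; rewrite mulr0. Qed.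

Lemma Lmul_cont a0 b0 N : exists M, forall a b,
  agree M a0 a -> agree M b0 b -> agree N (Lmul a0 b0) (Lmul a b).
Proof.
exists (Z.abs N + Z.abs (lb a0) + Z.abs (lb b0))%Z => a b aa bb n le_n.
have va := agree_vanish aa (@vanish_lb a0) ltac:(lia).
have vb := agree_vanish bb (@vanish_lb b0) ltac:(lia).
rewrite (coef_Lmul_window n (@vanish_lb a0) (@vanish_lb b0)) (coef_Lmul_window n va vb).
by apply: eq_bigr => j _; have lt_j := ltn_ord j; rewrite aa ?bb //; lia.
Qed.

Lemma mono_lb (m : Z) : exists N, forall k, (k < N)%Z -> (if (k =? m)%Z then 1 else 0 : F) = 0.
Proof. by exists m => k lt_k; case: Z.eqb_spec => //; lia. Qed.

Definition mono (m : Z) : laurent F := Laurent (mono_lb m).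

Lemma coef_mono m k : coef (mono m) k = if (k =? m)%Z then 1 else 0.
Proof. by []. Qed.

Lemma mono_vanish m : vanish (mono m) m.
Proof. by move=> k lt_k; rewrite coef_mono; case: Z.eqb_spec => //; lia. Qed.

Lemma mono_is_val m : is_val (mono m) m.
Proof.
by split; [rewrite coef_mono Z.eqb_refl; apply/eqP; exact: oner_neq0 | exact: (@mono_vanish m)].
Qed.

Lemma Lone_mono : Lone F = mono 0.
Proof. exact: laurent_ext. Qed.

Lemma coef_Lmul_mono m b n : coef (Lmul (mono m) b) n = coef b (n - m).
Proof.
rewrite (coef_Lmul_window n (@mono_vanish m) (@vanish_lb b)).
case eq_M: (Z.to_nat (n - m - lb b + 1)) => [|M].
  by rewrite big_ord0 vanish_lb //; lia.
rewrite big_ord_recl big1 => [|j _]; last first.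
  by rewrite lift0 coef_mono; case: Z.eqb_spec; [lia | rewrite mul0r].
by rewrite coef_mono /= Z.add_0_r Z.eqb_refl mul1r addr0.
Qed.

Lemma Lmul_mono m m' : Lmul (mono m) (mono m') = mono (m + m').
Proof.
apply: laurent_ext => k; rewrite coef_Lmul_mono !coef_mono.
by do 2 case: Z.eqb_spec => //; lia.
Qed.

Lemma mono_agree N m m' : agree N (mono m) (mono m') -> (m <= N)%Z -> m = m'.
Proof.
move=> /(_ m) mm' le_m; move: (mm' le_m); rewrite !coef_mono Z.eqb_refl.
by case: Z.eqb_spec => // _ /eqP; rewrite oner_eq0.
Qed.

(** * Inversion *)

Section Inverse.
Variables (t : laurent F) (v : Z).
Hypothesis val_t : is_val t v.

(* [inv_rcoefs m] lists the coefficients of X^(m-v), ..., X^(-v) of the inverse of t. *)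
Fixpoint inv_rcoefs (m : nat) : seq F :=
  if m is m'.+1 then
    - (coef t v)^-1 * \sum_(i < m) coef t (v + Z.of_nat i.+1)%Z * (inv_rcoefs m')`_i
      :: inv_rcoefs m'
  else [:: (coef t v)^-1].

Lemma nth_inv_rcoefs m i : (i <= m)%nat -> (inv_rcoefs m)`_i = (inv_rcoefs (m - i))`_0.
Proof. by elim: m i => [|m IH] [|i] //= le_i; rewrite ?subn0 ?subSS // IH. Qed.

Definition inv_coef m := (inv_rcoefs m)`_0.

Lemma inv_coefS m : inv_coef m.+1 =
  - (coef t v)^-1 * \sum_(i < m.+1) coef t (v + Z.of_nat i.+1)%Z * inv_coef (m - i).
Proof. by congr (_ * _); apply: eq_bigr => i _; rewrite nth_inv_rcoefs // -ltnS. Qed.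

Lemma inv_series_lb : exists N, forall k, (k < N)%Z ->
  (if (k <? - v)%Z then 0 else inv_coef (Z.to_nat (k + v))) = 0.
Proof. by exists (- v)%Z => k lt_k; case: Z.ltb_spec => //; lia. Qed.

Definition inv_series : laurent F := Laurent inv_series_lb.

Lemma Lmul_inv_series : Lmul t inv_series = Lone F.
Proof.
have v_inv : vanish inv_series (- v) by move=> k lt_k /=; case: Z.ltb_spec => //; lia.
have tv_neq0 : coef t v != 0 by apply/eqP; exact: val_t.1.
apply: laurent_ext => n; rewrite (coef_Lmul_window n val_t.2 v_inv) /=.
have [lt_n|ge_n] := Z.lt_ge_cases n 0.
  have -> : Z.to_nat (n - v - - v + 1) = 0%nat by lia.
  by rewrite big_ord0; case: Z.eqb_spec => //; lia.
have [m ->] : exists m : nat, n = Z.of_nat m by exists (Z.to_nat n); lia.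
have -> : Z.to_nat (Z.of_nat m - v - - v + 1) = m.+1 by lia.
rewrite (eq_bigr (fun j : 'I_m.+1 => coef t (v + Z.of_nat j)%Z * inv_coef (m - j)))
  => [|j _]; last first.
  by have := ltn_ord j; case: Z.ltb_spec => [|_ lt_j]; [lia | congr (_ * inv_coef _); lia].
case: m => [|m] in ge_n *; first by rewrite big_ord1 /= Z.add_0_r mulfV.
rewrite big_ord_recl; under eq_bigr do rewrite lift0 subSS.
rewrite (_ : (v + Z.of_nat ord0)%Z = v) ?subn0; last exact: Z.add_0_r.
by rewrite inv_coefS mulrA mulrN mulfV // mulN1r addNr.
Qed.

End Inverse.

Lemma Lmul_Linv t v : is_val t v -> Lmul t (Linv t) = Lone F.
Proof.
move=> val_t; apply: (epsilon_spec (inhabits (Lzero F)) (fun b => Lmul t b = Lone F)).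
by exists (inv_series t v); exact: Lmul_inv_series.
Qed.

Lemma inverse_vanish t b v : is_val t v -> Lmul t b = Lone F -> vanish b (- v).
Proof.
move=> [tv vt] tb1 i lt_i; apply: NNPP => bi.
have [w [bw vb]] : exists w, is_val b w by apply: is_val_ex => b0; apply: bi; rewrite b0.
have le_w : (w <= i)%Z by apply: NNPP => lt_iw; apply: bi; apply: vb; lia.
have : coef (Lmul t b) (v + w)%Z = coef (Lone F) (v + w)%Z by rewrite tb1.
rewrite (coef_Lmul_window _ vt vb).
have -> : Z.to_nat (v + w - v - w + 1) = 1%nat by lia.
rewrite big_ord1 /= Z.add_0_r Z.add_simpl_l.
case: Z.eqb_spec => [|_ /eqP]; first lia.
by rewrite mulf_eq0 => /orP[] /eqP.
Qed.

Lemma coef_Lmul_lead t b v (m : nat) : vanish t v -> vanish b (- v) ->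
  coef (Lmul t b) (Z.of_nat m) = coef t v * coef b (Z.of_nat m - v)%Z +
   \sum_(j < m) coef t (v + Z.of_nat j.+1)%Z * coef b (Z.of_nat (m - j.+1) - v)%Z.
Proof.
move=> vt vb; rewrite (coef_Lmul_window _ vt vb).
have -> : Z.to_nat (Z.of_nat m - v - - v + 1) = m.+1 by lia.
rewrite big_ord_recl (_ : (v + Z.of_nat ord0)%Z = v); last exact: Z.add_0_r.
congr (_ + _).
by apply: eq_bigr => j _; have lt_j := ltn_ord j; rewrite lift0; congr (_ * coef b _); lia.
Qed.

Lemma inverse_agree t t' b b' v K : (0 <= K)%Z -> is_val t v -> vanish t' v ->
  agree (v + K) t t' -> Lmul t b = Lone F -> Lmul t' b' = Lone F -> agree (- v + K) b b'.
Proof.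
move=> K_ge0 val_t vt' tt' tb1 tb1'.
have val_t' : is_val t' v by split=> //; rewrite -tt'; [exact: val_t.1 | lia].
have [vb vb'] := (inverse_vanish val_t tb1, inverse_vanish val_t' tb1').
suff eq_b (m : nat) : (Z.of_nat m <= K)%Z ->
    coef b (Z.of_nat m - v)%Z = coef b' (Z.of_nat m - v)%Z.
  move=> k le_k; have [lt_k|ge_k] := Z.lt_ge_cases k (- v); first by rewrite vb ?vb'.
  have -> : k = (Z.of_nat (Z.to_nat (k + v)) - v)%Z by lia.
  by apply: eq_b; lia.
elim/ltn_ind: m => m IH le_m.
have : coef (Lmul t b) (Z.of_nat m) = coef (Lmul t' b') (Z.of_nat m) by rewrite tb1 tb1'.
rewrite (@coef_Lmul_lead t b v m) ?(@coef_Lmul_lead t' b' v m) //; last exact: val_t.2.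
have eq_sum : \sum_(j < m) coef t' (v + Z.of_nat j.+1)%Z * coef b' (Z.of_nat (m - j.+1) - v)%Z
    = \sum_(j < m) coef t (v + Z.of_nat j.+1)%Z * coef b (Z.of_nat (m - j.+1) - v)%Z.
  by apply: eq_bigr => j _; have lt_j := ltn_ord j; rewrite -tt' ?IH //; lia.
have tv_neq0 : coef t v != 0 by apply/eqP; exact: val_t.1.
by rewrite -(tt' v) ?eq_sum; [move/addIr/(mulfI tv_neq0) | lia].
Qed.

Lemma Linv_unique t v b : is_val t v -> Lmul t b = Lone F -> Linv t = b.
Proof.
move=> val_t tb1; apply: laurent_ext => k.
have := @inverse_agree t t (Linv t) b v (Z.abs k + Z.abs v).
by apply=> //; [lia | exact: val_t.2 | exact: Lmul_Linv val_t | lia].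
Qed.

Lemma Linv_mono m : Linv (mono m) = mono (- m).
Proof.
by apply: (Linv_unique (mono_is_val m)); rewrite Lmul_mono Z.add_opp_diag_r Lone_mono.
Qed.

Lemma Linv_cont t0 N : t0 <> Lzero F ->
  exists M, forall t, agree M t0 t -> agree N (Linv t0) (Linv t).
Proof.
move=> /is_val_ex [v val_t0]; pose K := (Z.abs N + 2 * Z.abs v)%Z.
exists (v + K)%Z => t t0t.
have vt : vanish t v by apply: agree_vanish t0t val_t0.2 _; lia.
have val_t : is_val t v by split=> //; rewrite -t0t; [exact: val_t0.1 | lia].
apply: agree_le (inverse_agree _ val_t0 vt t0t (Lmul_Linv val_t0) (Lmul_Linv val_t)); lia.
Qed.

(** * The absolute value *)

Definition rad N : R := powerRZ (INR #|F|) (- N).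

Lemma INR_card_gt1 : Rlt 1 (INR #|F|).
Proof. by apply: (lt_INR 1); apply/ltP; exact: card_finNzRing_gt1. Qed.

Lemma rad_gt0 N : Rlt 0 (rad N).
Proof. by apply: powerRZ_lt; have := INR_card_gt1; lra. Qed.

Lemma rad_ltP M N : Rlt (rad M) (rad N) <-> (N < M)%Z.
Proof.
have q_gt1 := INR_card_gt1.
have rad_lt m n : (n < m)%Z -> Rlt (rad m) (rad n).
  move=> lt_nm; rewrite /rad !powerRZ_Rpower; try lra.
  by apply: Rpower_lt => //; apply: IZR_lt; lia.
split=> [lt_rad | /rad_lt //]; apply: NNPP => /Z.nlt_ge le_MN.
have [eq_MN|lt_MN] : M = N \/ (M < N)%Z by lia.
  by subst; lra.
by have := rad_lt N M lt_MN; lra.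
Qed.

Lemma rad_small eps : Rlt 0 eps -> exists N, Rlt (rad N) eps.
Proof.
move=> eps_gt0; have q_gt1 := INR_card_gt1.
have inv_q_pos : Rlt 0 (/ INR #|F|) by apply: Rinv_0_lt_compat; lra.
have [|n small_n] := pow_lt_1_zero (/ INR #|F|) _ eps eps_gt0.
  rewrite Rabs_pos_eq; last lra.
  by rewrite -[X in Rlt _ X]Rinv_1; apply: Rinv_1_lt_contravar; lra.
exists (Z.of_nat n); rewrite /rad powerRZ_neg' -pow_powerRZ -pow_inv.
by have := small_n n (Nat.le_refl n); rewrite Rabs_pos_eq //; apply: pow_le; lra.
Qed.

Lemma Labs_lt_radP a N : Rlt (Labs a) (rad N) <-> vanish a (N + 1).
Proof.
rewrite /Labs; case: excluded_middle_informative => [nz | all0]; last first.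
  by split=> [_ k _ | _]; [apply: NNPP => ak; apply: all0; exists k | exact: rad_gt0].
have [av va] : is_val a (Lval a).
  apply: (epsilon_spec (inhabits 0%Z) (is_val a)); apply: is_val_ex.
  by case: nz => k ak a0; apply: ak; rewrite a0.
rewrite -/(rad (Lval a)) rad_ltP; split=> [lt_N k lt_k | va']; first by apply: va; lia.
by apply: NNPP => /Z.nlt_ge le_N; apply: av; apply: va'; lia.
Qed.

Lemma Ldist_lt_radP a b N : Rlt (Ldist a b) (rad N) <-> agree N a b.
Proof.
rewrite /Ldist Labs_lt_radP; split=> [vab k le_k | ab k lt_k].
  by apply/eqP; rewrite -subr_eq0 -coef_Lsub; apply/eqP; apply: vab; lia.
by rewrite coef_Lsub ab ?subrr //; lia.
Qed.

Lemma Ldist_refl a : Ldist a a = 0%R.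
Proof.
rewrite /Ldist Lsubrr /Labs; case: excluded_middle_informative => // -[k].
by case.
Qed.

Lemma cont_on_seq (E : Defs.space F) (A : E -> Prop) (G : E -> laurent F) (p : E)
    (u : nat -> E) :
  cont_on A G -> A p -> (forall n, A (u n)) ->
  (forall N (n : nat), (N < Z.of_nat n)%Z -> Rlt (pdist p (u n)) (rad N)) ->
  forall N, exists n0 : nat, forall n, (n0 <= n)%nat -> agree N (G p) (G (u n)).
Proof.
move=> G_cont Ap Au u_p N.
have [del [del_gt0 G_del]] := G_cont p Ap (rad N) (rad_gt0 N).
have [M lt_M] := rad_small del_gt0.
exists (Z.to_nat (M + 1)) => n le_n; apply/Ldist_lt_radP; apply: G_del => //.
by apply: Rlt_trans lt_M; apply: u_p; lia.
Qed.

Lemma coef_fO a n : coef (fO a) n = if (n <? 0)%Z then 0 else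
  \sum_(k < (Z.to_nat n).+1 | (3 * k)%nat./2 == Z.to_nat n) coef a (Z.of_nat k).
Proof. by []. Qed.

Lemma fO_agree N a b : agree N a b -> agree N (fO a) (fO b).
Proof.
move=> ab k le_k; rewrite !coef_fO; case: Z.ltb_spec => // k_ge0.
by apply: eq_bigr => j _; have lt_j := ltn_ord j; apply: ab; lia.
Qed.

Lemma coef_fO_small a w n : vanish a w -> (2 * n + 1 < 3 * w)%Z -> coef (fO a) n = 0.
Proof.
move=> va lt_n; rewrite coef_fO; case: Z.ltb_spec => // n_ge0.
by rewrite big1 // => k /eqP eq_k; apply: va; lia.
Qed.

Lemma fO_increment (x y : laurent F) : Lsub (fO (Ladd x y)) (fO x) = fO y.
Proof.
apply: laurent_ext => n; rewrite coef_Lsub !coef_fO.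
case: Z.ltb_spec => _; first by rewrite subr0.
by rewrite big_split /= addrAC subrr add0r.
Qed.

Lemma fO0 : fO (Lzero F) = Lzero F.
Proof. by apply: laurent_ext => n; rewrite coef_fO big1 ?if_same. Qed.

Lemma fO_mono (n : nat) : fO (mono (Z.of_nat n)) = mono (Z.of_nat (3 * n)%nat./2).
Proof.
apply: laurent_ext => m; rewrite coef_fO coef_mono.
case: Z.ltb_spec => [lt_m|ge_m]; first by case: Z.eqb_spec => //; lia.
rewrite (eq_bigr (fun k : 'I__ => if k == n :> nat then 1 else 0)) => [|k _]; last first.
  by rewrite coef_mono; case: Z.eqb_spec => ?; case: eqP => //; lia.
rewrite -big_mkcondr (big_ord1_cond_eq _ (fun=> 1) (fun k => (3 * k)%nat./2 == Z.to_nat m)).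
have -> : ((n < (Z.to_nat m).+1) && ((3 * n)./2 == Z.to_nat m))%nat =
    (m =? Z.of_nat (3 * n)./2)%Z.
  apply/idP/idP => [/andP[_ /eqP eq_m] | /Z.eqb_spec eq_m]; first by apply/Z.eqb_spec; lia.
  by apply/andP; split; [|apply/eqP]; lia.
by [].
Qed.

(** * Smoothness in Ludkovsky's sense *)

(* The extension of t^-1 (f(x + t xi) - f(x)) = t^-1 f(t xi) to t = 0: there [Linv t] is a
   junk value, but it multiplies f(0) = 0. *)
Definition fO_dq xi t := Lmul (Linv t) (fO (Lmul t xi)).

Lemma fO_dq0 xi : fO_dq xi (Lzero F) = Lzero F.
Proof. by rewrite /fO_dq Lmul_0l fO0 Lmul_0r. Qed.

Lemma fO_dq_small xi t be v N : vanish xi be -> vanish t v ->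
  (2 * N + 1 < v + 3 * be)%Z -> agree N (Lzero F) (fO_dq xi t).
Proof.
move=> vxi vt lt_N.
case: (classic (t = Lzero F)) => [->|/is_val_ex [w val_t]]; first by rewrite fO_dq0.
have le_vw : (v <= w)%Z by apply: NNPP => /Z.nle_gt lt_wv; apply: val_t.1; apply: vt.
have v_inv := inverse_vanish val_t (Lmul_Linv val_t).
have v_f : vanish (fO (Lmul t xi)) (N + w + 1).
  by move=> n lt_n; apply: (coef_fO_small (Lmul_vanish val_t.2 vxi)); lia.
by move=> k le_k; rewrite (Lmul_vanish v_inv v_f) //; lia.
Qed.

Lemma fO_dq_cont xi0 t0 N : exists M, forall xi t,
  agree M xi0 xi -> agree M t0 t -> agree N (fO_dq xi0 t0) (fO_dq xi t).
Proof.
case: (classic (t0 = Lzero F)) => [->|t0_neq0].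
  exists (2 * Z.abs N + 4 * Z.abs (lb xi0) + 1)%Z => xi t xi0xi t0t; rewrite fO_dq0.
  apply: (fO_dq_small (be := lb xi0) (v := 2 * Z.abs N + 4 * Z.abs (lb xi0) + 2)%Z).
  - by apply: agree_vanish xi0xi (@vanish_lb xi0) _; lia.
  - by apply: agree_vanish t0t (@vanish0 _) _; lia.
  - by lia.
have [M1 mul_M1] := Lmul_cont (Linv t0) (fO (Lmul t0 xi0)) N.
have [M2 inv_M2] := Linv_cont M1 t0_neq0.
have [M3 mul_M3] := Lmul_cont t0 xi0 M1.
exists (Z.max M2 M3) => xi t xi0xi t0t.
apply: mul_M1; first by apply: inv_M2; apply: agree_le t0t; lia.
by apply: fO_agree; apply: mul_M3; apply: agree_le; eauto; lia.
Qed.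

Lemma fO_cont : cont_on (E := Kspace F) (@inO F) (@fO F).
Proof.
move=> a _ eps eps_gt0; have [N lt_N] := rad_small eps_gt0.
exists (rad N); split=> [|b _ /Ldist_lt_radP ab]; first exact: rad_gt0.
by apply: Rlt_trans lt_N; apply/Ldist_lt_radP; exact: fO_agree.
Qed.

(* Phibar_j(f) vanishes for j >= 2 because Phibar_1(f) = fO_dq does not depend on x. *)
Definition fO_Phibar (x : laurent F) (ps : seq (laurent F * laurent F)) : laurent F :=
  match ps with
  | [::] => fO x
  | [:: (xi, t)] => fO_dq xi t
  | _ => Lzero F
  end.

Lemma fO_Phibar_cons x y p ps : fO_Phibar x (p :: ps) = fO_Phibar y (p :: ps).
Proof. by case: p; case: ps. Qed.

Lemma fO_Phibar_size2 x ps : (1 < size ps)%nat -> fO_Phibar x ps = Lzero F.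
Proof. by case: ps => [|[xi t] [|p ps]]. Qed.

Lemma CLud_fO k : CLud k (@inO F) (@fO F).
Proof.
split; first exact: fO_cont.
exists fO_Phibar; split=> // j /andP[j_gt0 _]; split.
  move=> x xi t [|p ps] _ _ _; first by rewrite /= fO_increment.
  by rewrite (fO_Phibar_cons (Ladd x (Lmul t xi)) x) Lsubrr Lmul_0r.
move=> x [|[xi0 t0] ps] size_ps _ eps eps_gt0; first by rewrite -size_ps in j_gt0.
have [N lt_N] := rad_small eps_gt0.
case: ps => [|p ps] in size_ps *; last first.
  have size_gt1 : (1 < j)%nat by rewrite -size_ps.
  exists 1%R; split=> [|x' ps' size_ps' _ _]; first lra.
  by rewrite !fO_Phibar_size2 ?Ldist_refl ?size_ps'.
have [M dq_M] := fO_dq_cont xi0 t0 N.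
exists (rad M); split=> [|x' ps' size_ps' _]; first exact: rad_gt0.
rewrite -size_ps in size_ps'; case: ps' size_ps' => [|[xi t] [|p ps']] // _.
case/Rmax_Rlt => _ /Rmax_Rlt[/Rmax_Rlt[/Ldist_lt_radP xi0xi /Ldist_lt_radP t0t] _].
by apply: Rlt_trans lt_N; apply/Ldist_lt_radP; exact: dq_M.
Qed.

(** * Failure of BGN smoothness of order 2 *)

Lemma mono_neq0 m : mono m <> Lzero F.
Proof. by move=> m0; apply: (mono_is_val m).1; rewrite m0. Qed.

Lemma inO_mono (n : nat) : inO (mono (Z.of_nat n)).
Proof. by move=> k lt_k; apply: mono_vanish; lia. Qed.

Lemma Ldist0_mono N m : (N < m)%Z -> Rlt (Ldist (Lzero F) (mono m)) (rad N).
Proof.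
move=> lt_N; apply/Ldist_lt_radP => k le_k.
by rewrite coef_mono; case: Z.eqb_spec => //; lia.
Qed.

Lemma dist_prod3_lt (E : Defs.space F) (x y : E) s t (r : R) :
  Rlt (pdist x x) r -> Rlt (pdist y y) r -> Rlt (Ldist s t) r ->
  Rlt (@pdist F (prod3 E) (x, y, s) (x, y, t)) r.
Proof. by move=> xx yy st; do 2 apply: Rmax_lub_lt => //. Qed.

Local Notation O1 := (U1 (E := Kspace F) (@inO F)).
Local Notation O2 := (U1 (E := prod3 (Kspace F)) O1).

Definition ray0 : prod3 (Kspace F) := (Lzero F, Lone F, Lzero F).
Definition ray (n : nat) : prod3 (Kspace F) := (Lzero F, Lone F, mono (Z.of_nat n)).

Lemma U1_ray0 : O1 ray0.
Proof. by split=> //=; rewrite Lmul_0l Ladd_0l. Qed.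

Lemma U1_ray n : O1 (ray n).
Proof. by split=> //=; rewrite Lone_mono Lmul_mono Z.add_0_r Ladd_0l; exact: inO_mono. Qed.

Lemma dist_ray N n : (N < Z.of_nat n)%Z -> Rlt (pdist ray0 (ray n)) (rad N).
Proof.
move=> lt_N; apply: dist_prod3_lt; rewrite /= ?Ldist_refl; [exact: rad_gt0 | exact: rad_gt0 |].
exact: Ldist0_mono.
Qed.

Lemma diffq_fO_ray n : diffq (E := Kspace F) (@fO F) (ray n) =
  mono (Z.of_nat (3 * n)%nat./2 - Z.of_nat n).
Proof.
rewrite /diffq /= Lone_mono Lmul_mono Z.add_0_r Ladd_0l fO0 Lsub_0r fO_mono.
by rewrite Linv_mono Lmul_mono Z.add_comm.
Qed.

Lemma fO_ext_ray0 (G : prod3 (Kspace F) -> laurent F) :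
  (forall p, O1 p -> p.2 <> Lzero F -> G p = diffq (E := Kspace F) (@fO F) p) ->
  cont_on O1 G -> G ray0 = Lzero F.
Proof.
move=> G_ext G_cont; apply: laurent_ext => k.
have [n0 near_n0] := cont_on_seq G_cont U1_ray0 U1_ray dist_ray k.
pose n := maxn n0 (Z.to_nat (2 * Z.abs k + 2)).
rewrite (near_n0 n) ?leq_maxl //; last exact: Z.le_refl.
rewrite G_ext ?diffq_fO_ray ?coef_mono; [| exact: U1_ray | exact: mono_neq0].
by case: Z.eqb_spec => //; rewrite /n; lia.
Qed.

Definition ray20 : prod3 (prod3 (Kspace F)) := (ray0, (Lzero F, Lzero F, Lone F), Lzero F).
Definition ray2 (n : nat) : prod3 (prod3 (Kspace F)) :=
  (ray0, (Lzero F, Lzero F, Lone F), mono (Z.of_nat n)).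

Lemma ray2_shift n : padd (ray2 n).1.1 (pscale (ray2 n).2 (ray2 n).1.2) = ray n.
Proof. by rewrite /ray /= !Lmul_0r !Ladd_0r Lone_mono Lmul_mono Z.add_0_r Ladd_0l. Qed.

Lemma U1_ray20 : O2 ray20.
Proof. by split; [exact: U1_ray0 | rewrite /= !Lmul_0l !Ladd_0r; exact: U1_ray0]. Qed.

Lemma U1_ray2 n : O2 (ray2 n).
Proof. by split; [exact: U1_ray0 | rewrite ray2_shift; exact: U1_ray]. Qed.

Lemma dist_ray2 N n : (N < Z.of_nat n)%Z -> Rlt (pdist ray20 (ray2 n)) (rad N).
Proof.
move=> lt_N; apply: dist_prod3_lt; last exact: Ldist0_mono.
  by apply: dist_prod3_lt; rewrite /= Ldist_refl; exact: rad_gt0.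
by apply: dist_prod3_lt; rewrite /= Ldist_refl; exact: rad_gt0.
Qed.

Lemma not_CBGN2_fO : ~ @CBGN F 2 (Kspace F) (@inO F) (@fO F).
Proof.
move=> [_ [G [G_ext [G_cont [_ [G2 [G2_ext [G2_cont _]]]]]]]].
have G_ray0 := fO_ext_ray0 G_ext G_cont.
have G2_ray2 n : G2 (ray2 n) = mono (Z.of_nat (3 * n)%nat./2 - 2 * Z.of_nat n).
  rewrite G2_ext; [|exact: U1_ray2 | exact: mono_neq0].
  rewrite /diffq ray2_shift G_ext; [|exact: U1_ray | exact: mono_neq0].
  by rewrite diffq_fO_ray G_ray0 Lsub_0r Linv_mono Lmul_mono; congr mono; lia.
have [n0 near_n0] := cont_on_seq G2_cont U1_ray20 U1_ray2 dist_ray2 0.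
have := agree_trans (agree_sym (near_n0 n0 (leqnn n0))) (near_n0 n0.+2 (leqW (leqnSn n0))).
rewrite !G2_ray2 => /mono_agree /(_ ltac:(lia)); lia.
Qed.

End LaurentSeries.

Theorem theorem3p7 (F : finFieldType) :
  CLud_inf (@inO F) (@fO F) /\ ~ @CBGN F 2 (Kspace F) (@inO F) (@fO F).
Proof. by split; [move=> k; exact: CLud_fO | exact: not_CBGN2_fO]. Qed.
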